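(* In $X=(\mathbb{R}^2,\|\cdot\|_\infty)$ let $A=\{(x,y):x>0,\ y\ge1/x\}$, $B=B_1\cup B_2$ with $B_1=\{(x,y):x>-1,\ y\le\frac{1}{x+1}-1\}$ and $B_2=\{(x,y):x\le-1,\ y\in\mathbb{R}\}$, and let $\overline{A}=\{(x,y):x>0,\ y=1/x\}$ and $\overline{B}=\{(x,y):x>-1,\ y=\frac{1}{x+1}-1\}$. Define $T:A\cup B\to\mathbb{R}^2$ by $$Tz=\left(-\tfrac{d(z,\overline{A})}{2},-\tfrac{d(z,\overline{A})}{2}\right)\ \text{for }z\in A,\qquad Tz=\left(1+\tfrac{d(z,\overline{B})}{2},1+\tfrac{d(z,\overline{B})}{2}\right)\ \text{for }z\in B.$$ Then $\mathrm{dist}(A,B)=1$, $T(A)\subseteq B$, $T(B)\subseteq A$, and $$\|Ta-Tb\|_\infty\le\tfrac12\|a-b\|_\infty+\tfrac12\,\mathrm{dist}(A,B)\quad\text{for all }a\in A,\ b\in B.$$ Consequently $T$ has a unique best proximity point in $A$, even though the ordered pair $(A,B)$ does not have the $UC$ property.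
   Context: $\|(x,y)\|_\infty=\max\{|x|,|y|\}$; $d(z,S)=\inf\{\|z-s\|_\infty:s\in S\}$; $\mathrm{dist}(A,B)=\inf\{\|a-b\|_\infty:a\in A,b\in B\}$. A point $x\in A$ is a best proximity point of $T$ in $A$ if $\|x-Tx\|_\infty=\mathrm{dist}(A,B)$. The ordered pair $(A,B)$ has the $UC$ property if for all sequences $\{x_n\},\{z_n\}\subset A$, $\{y_n\}\subset B$ with $\lim_n\|x_n-y_n\|_\infty=\lim_n\|z_n-y_n\|_\infty=\mathrm{dist}(A,B)$ one has $\lim_n\|x_n-z_n\|_\infty=0$. *)

From HB Require Import structures.
From mathcomp Require Import all_boot all_order all_algebra.
From mathcomp Require Import all_classical all_reals all_analysis.
Set Implicit Arguments. Unset Strict Implicit. Unset Printing Implicit Defensive.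
Import Order.TTheory GRing.Theory Num.Theory.
Import numFieldNormedType.Exports.
Local Open Scope classical_set_scope.
Local Open Scope ring_scope.

Section Defs.
Variable R : realType.
Notation P := (R * R)%type.

Definition ninf (a b : P) : R := Num.max `|a.1 - b.1| `|a.2 - b.2|.

Definition dpt (z : P) (S : set P) : R := inf [set ninf z s | s in S].

Definition dist (A B : set P) : R :=
  inf [set r | exists a b, A a /\ B b /\ r = ninf a b].

Definition best_prox (A : set P) (B : set P) (T : P -> P) (x : P) : Prop :=
  A x /\ ninf x (T x) = dist A B.

Definition UC_property (A B : set P) : Prop :=
  forall (x z y : nat -> P),
    (forall n, A (x n)) -> (forall n, A (z n)) -> (forall n, B (y n)) ->
    (fun n => ninf (x n) (y n)) @ \oo --> dist A B ->
    (fun n => ninf (z n) (y n)) @ \oo --> dist A B ->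
    (fun n => ninf (x n) (z n)) @ \oo --> (0 : R).

Definition exA : set P := [set p | 0 < p.1 /\ p.1^-1 <= p.2].
Definition exB1 : set P := [set p | -1 < p.1 /\ p.2 <= (p.1 + 1)^-1 - 1].
Definition exB2 : set P := [set p | p.1 <= -1].
Definition exB : set P := exB1 `|` exB2.
Definition exAbar : set P := [set p | 0 < p.1 /\ p.2 = p.1^-1].
Definition exBbar : set P := [set p | -1 < p.1 /\ p.2 = (p.1 + 1)^-1 - 1].

(* T on A u B (A and B are disjoint); outside A u B the value is irrelevant
   and T uses the B-formula. *)
Definition exT (z : P) : P :=
  if `[< exA z >] then (- (dpt z exAbar / 2), - (dpt z exAbar / 2))
  else (1 + dpt z exBbar / 2, 1 + dpt z exBbar / 2).

End Defs.

From HB Require Import structures.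
From mathcomp Require Import all_boot all_order all_algebra.
From mathcomp Require Import all_classical all_reals all_analysis.
From mathcomp Require Import ring lra.
Set Implicit Arguments. Unset Strict Implicit. Unset Printing Implicit Defensive.
Import Order.TTheory GRing.Theory Num.Theory.
Import numFieldNormedType.Exports.
Local Open Scope classical_set_scope.
Local Open Scope ring_scope.

(* Let h(p) be the unique t such that p - (t, t) lies on the hyperbola
   Abar = {xy = 1, x > 0}.  No two points of Abar are strictly ordered in both
   coordinates, so h is 1-Lipschitz for the sup norm; moreover A = {h >= 0} and
   B = {h <= -1}.  Hence dist(A, B) = 1, attained at (1, 1) and (0, 0).  T maps
   into the diagonal, where h(t, t) = t - 1, so T swaps A and B, and the
   estimates d(z, Abar) <= |h z|, d(z, Bbar) <= |h z + 1| give the contraction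
   inequality.  The Lipschitz bound forces a best proximity point onto Abar
   inside the unit square, i.e. to be (1, 1).  UC fails far out along the
   hyperbolas, where points of A at sup distance 2 are almost equidistant
   from a common point of B. *)

Section HyperbolaShift.
Variable R : realType.
Implicit Types (p q : (R * R)%type) (s t : R).

Definition shift p t : R * R := (p.1 + t, p.2 + t).

Lemma shift0 p : shift p 0 = p.
Proof. by rewrite /shift !addr0 -surjective_pairing. Qed.

Lemma shift_shift p s t : shift (shift p s) t = shift p (s + t).
Proof. by rewrite /shift /= !addrA. Qed.

Lemma ninf_ge0 p q : 0 <= ninf p q.
Proof. by rewrite /ninf le_max normr_ge0. Qed.

Lemma sub_le_ninf p q : p.1 - q.1 <= ninf p q /\ p.2 - q.2 <= ninf p q.
Proof. by split; rewrite /ninf le_max ler_norm ?orbT. Qed.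

Lemma ninf_shift p t : ninf p (shift p t) = `|t|.
Proof. by rewrite /ninf /= !opprD !addrA !subrr !add0r normrN maxxx. Qed.

Lemma ninf_diag s t : ninf (s, s) (t, t) = `|s - t|.
Proof. by rewrite /ninf /= maxxx. Qed.

Lemma dpt_ge0 p (S : set (R * R)) : 0 <= dpt p S.
Proof.
have [->|/set0P [q Sq]] := eqVneq S set0; first by rewrite /dpt image_set0 inf0.
apply: lb_le_inf; first by exists (ninf p q), q.
by move=> _ [r _ <-]; exact: ninf_ge0.
Qed.

Lemma dpt_le p (S : set (R * R)) q : S q -> dpt p S <= ninf p q.
Proof.
move=> Sq; apply: ge_inf; last by exists q.
by exists 0 => _ [r _ <-]; exact: ninf_ge0.
Qed.

Lemma dpt_le_shift p (S : set (R * R)) t : S (shift p t) -> dpt p S <= `|t|.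
Proof. by move=> /(dpt_le p); rewrite ninf_shift. Qed.

Lemma exAbar_mulP p : exAbar p <-> 0 < p.1 /\ p.1 * p.2 = 1.
Proof.
split=> -[p1 e]; split=> //; first by rewrite e mulfV // lt0r_neq0.
by apply: (mulfI (lt0r_neq0 p1)); rewrite e mulfV // lt0r_neq0.
Qed.

Lemma exAbar_le_eq p q : exAbar p -> exAbar q -> p.1 <= q.1 -> p.2 <= q.2 -> p = q.
Proof.
move=> /exAbar_mulP [p1 pp] /exAbar_mulP [_ qq] le1 le2.
have p2 : 0 < p.2 by nra.
have e1 : p.1 = q.1 by nra.
have e2 : p.2 = q.2 by nra.
by rewrite [p]surjective_pairing [q]surjective_pairing e1 e2.
Qed.

Lemma exAbar_antichain p q : exAbar p -> exAbar q -> p.1 < q.1 -> p.2 < q.2 -> False.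
Proof.
move=> Ap Aq lt_1 lt_2; have pq := exAbar_le_eq Ap Aq (ltW lt_1) (ltW lt_2).
by move: lt_1; rewrite pq ltxx.
Qed.

(* The smaller root t of (p.1 - t) * (p.2 - t) = 1. *)
Definition hyp_shift p : R := (p.1 + p.2 - Num.sqrt ((p.1 - p.2) ^+ 2 + 4)) / 2.

Lemma exAbar_hyp_shift p : exAbar (shift p (- hyp_shift p)).
Proof.
apply/exAbar_mulP; rewrite /hyp_shift /=.
set s := Num.sqrt _; have s0 : 0 <= s by exact: sqrtr_ge0.
have s2 : s ^+ 2 = (p.1 - p.2) ^+ 2 + 4 by rewrite sqr_sqrtr // addr_ge0 ?sqr_ge0.
split; nra.
Qed.

Lemma hyp_shift_uniq p t : exAbar (shift p (- t)) -> t = hyp_shift p.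
Proof.
move=> At; have Ah := exAbar_hyp_shift p.
case: (ltgtP t (hyp_shift p)) => // lt; exfalso.
  by apply: (exAbar_antichain Ah At); rewrite /=; lra.
by apply: (exAbar_antichain At Ah); rewrite /=; lra.
Qed.

Lemma hyp_shift_shift p t : hyp_shift (shift p t) = hyp_shift p + t.
Proof.
symmetry; apply: hyp_shift_uniq.
by rewrite shift_shift opprD addrCA subrr addr0; exact: exAbar_hyp_shift.
Qed.

Lemma hyp_shift_eq0 p : hyp_shift p = 0 <-> exAbar p.
Proof.
split=> [h0|Ap]; first by have := exAbar_hyp_shift p; rewrite h0 oppr0 shift0.
by symmetry; apply: hyp_shift_uniq; rewrite oppr0 shift0.
Qed.

Lemma exAbar11 : exAbar ((1, 1) : R * R).
Proof. by split; rewrite //= invr1. Qed.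

Lemma hyp_shift_diag t : hyp_shift (t, t) = t - 1.
Proof.
have -> : (t, t) = shift (1, 1) (t - 1) by rewrite /shift /= addrC subrK.
by rewrite hyp_shift_shift (hyp_shift_eq0 _).2 ?add0r //; exact: exAbar11.
Qed.

Lemma hyp_shift_lipschitz p q : hyp_shift p - hyp_shift q <= ninf p q.
Proof.
rewrite leNgt; apply/negP => lt; have [le1 le2] := sub_le_ninf p q.
by apply: (exAbar_antichain (exAbar_hyp_shift p) (exAbar_hyp_shift q)); rewrite /=; lra.
Qed.

Lemma exA_hyp_shift p : exA p <-> 0 <= hyp_shift p.
Proof.
have Ah := exAbar_hyp_shift p; split=> [[p1 p2]|h0].
  rewrite leNgt; apply/negP => lt.
  have Aq : exAbar (p.1, p.1^-1) by [].
  by apply: (exAbar_antichain Aq Ah); rewrite /=; lra.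
case: Ah => /= P1 P2; split; first lra.
have : p.1^-1 <= (p.1 + - hyp_shift p)^-1 by rewrite lef_pV2 ?posrE; lra.
lra.
Qed.

Lemma exB_hyp_shift p : exB p <-> hyp_shift p <= -1.
Proof.
have Ah := exAbar_hyp_shift p; split=> [Bp|h1].
  rewrite leNgt; apply/negP => lt; case: Bp => [[p1 p2]|p1].
    have Aq : exAbar (p.1 + 1, (p.1 + 1)^-1) by split; rewrite //=; lra.
    by apply: (exAbar_antichain Ah Aq); rewrite /=; lra.
  by case: Ah => /= P1 _; move: p1; rewrite /exB2 /=; lra.
case: (lerP p.1 (-1)) => p1; [by right | left]; split=> //.
case: Ah => /= P1 P2.
have : (p.1 + - hyp_shift p)^-1 <= (p.1 + 1)^-1 by rewrite lef_pV2 ?posrE; lra.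
lra.
Qed.

Lemma exA_diag t : exA (t, t) <-> 1 <= t.
Proof. by rewrite exA_hyp_shift hyp_shift_diag subr_ge0. Qed.

Lemma exB_diag t : exB (t, t) <-> t <= 0.
Proof. by rewrite exB_hyp_shift hyp_shift_diag lerBlDr addNr. Qed.

Lemma dpt_exAbar_le p : dpt p (@exAbar R) <= `|hyp_shift p|.
Proof. by rewrite -normrN; apply: dpt_le_shift; exact: exAbar_hyp_shift. Qed.

Lemma dpt_exBbar_le p : dpt p (@exBbar R) <= `|hyp_shift p + 1|.
Proof.
rewrite -normrN; apply: dpt_le_shift.
have [/= P1 P2] := exAbar_hyp_shift p.
split=> /=; first lra.
have -> : p.1 + - (hyp_shift p + 1) + 1 = p.1 + - hyp_shift p by ring.
by rewrite -P2; ring.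
Qed.

End HyperbolaShift.

Section Example.
Variable R : realType.
Implicit Types (a b x : (R * R)%type) (s t : R).

Lemma ninf_exA_exB_ge1 a b : exA a -> exB b -> 1 <= ninf a b.
Proof.
move=> /exA_hyp_shift ha /exB_hyp_shift hb.
by have := hyp_shift_lipschitz a b; lra.
Qed.

Lemma dist_exA_exB : dist (@exA R) (@exB R) = 1.
Proof.
have A11 : exA ((1, 1) : R * R) by apply/exA_diag.
have B00 : exB ((0, 0) : R * R) by apply/exB_diag.
have d1 : ninf ((1, 1) : R * R) (0, 0) = 1 by rewrite ninf_diag subr0 normr1.
apply/le_anti/andP; split.
  apply: ge_inf; last by exists (1, 1), (0, 0).
  by exists 0 => _ [a [b [_ [_ ->]]]]; exact: ninf_ge0.
apply: lb_le_inf; first by exists 1, (1, 1), (0, 0).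
by move=> _ [a [b [Aa [Bb ->]]]]; exact: ninf_exA_exB_ge1.
Qed.

Lemma exT_exA a : exA a -> exT a = (- (dpt a (@exAbar R) / 2), - (dpt a (@exAbar R) / 2)).
Proof. by move=> Aa; rewrite /exT asboolT. Qed.

Lemma exT_exB b : exB b -> exT b = (1 + dpt b (@exBbar R) / 2, 1 + dpt b (@exBbar R) / 2).
Proof.
move=> Bb; rewrite /exT asboolF // => /exA_hyp_shift.
by move/exB_hyp_shift: Bb; lra.
Qed.

Lemma exT_exA_exB a : exA a -> exB (exT a).
Proof.
move=> Aa; rewrite exT_exA // exB_diag; have := dpt_ge0 a (@exAbar R); lra.
Qed.

Lemma exT_exB_exA b : exB b -> exA (exT b).
Proof.
move=> Bb; rewrite exT_exB // exA_diag; have := dpt_ge0 b (@exBbar R); lra.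
Qed.

Lemma exT_contraction a b : exA a -> exB b ->
  ninf (exT a) (exT b) <= ninf a b / 2 + dist (@exA R) (@exB R) / 2.
Proof.
move=> Aa Bb; rewrite exT_exA // exT_exB // ninf_diag dist_exA_exB.
move/exA_hyp_shift: Aa => ha; move/exB_hyp_shift: Bb => hb.
have da := dpt_exAbar_le a; rewrite ger0_norm // in da.
have db := dpt_exBbar_le b; rewrite ler0_norm in db; last lra.
have da0 := dpt_ge0 a (@exAbar R); have db0 := dpt_ge0 b (@exBbar R).
have := hyp_shift_lipschitz a b.
by rewrite ler0_norm; lra.
Qed.

Lemma best_prox_exTE x : best_prox (@exA R) (@exB R) (@exT R) x <-> x = (1, 1).
Proof.
rewrite /best_prox dist_exA_exB; split=> [[Ax]|->].
  rewrite exT_exA //; set u := dpt x _ / 2 => dx.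
  have u0 : 0 <= u by rewrite /u; have := dpt_ge0 x (@exAbar R); lra.
  have lip := hyp_shift_lipschitz x (- u, - u); rewrite hyp_shift_diag dx in lip.
  move/exA_hyp_shift: (Ax) => hx.
  have /hyp_shift_eq0 Abx : hyp_shift x = 0 by lra.
  have [le1 le2] := sub_le_ninf x (- u, - u); rewrite dx /= in le1 le2.
  by apply: exAbar_le_eq Abx (exAbar11 R) _ _; rewrite /=; lra.
have A11 : exA ((1, 1) : R * R) by apply/exA_diag.
have d0 : dpt (1, 1) (@exAbar R) = 0.
  apply/le_anti; rewrite dpt_ge0 andbT.
  by have := dpt_le (1, 1) (exAbar11 R); rewrite ninf_diag subrr normr0.
by split=> //; rewrite exT_exA // d0 mul0r oppr0 ninf_diag subr0 normr1.
Qed.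

Lemma inv_bounds_ge1 s t : 1 <= s -> s <= t -> [/\ 0 < t^-1, t^-1 <= s^-1 & s^-1 <= 1].
Proof.
move=> s1 st; have s0 : 0 < s by lra.
split; first by rewrite invr_gt0; lra.
  by rewrite lef_pV2 ?posrE //; lra.
by rewrite invr_le1 // unitf_gt0.
Qed.

Lemma ninf_hyperbola_shift s t : 1 <= s -> t = s + 2 ->
  ninf (s, s^-1) (shift (t, t^-1) (-1)) = 1 + (s^-1 - t^-1).
Proof.
move=> s1 ->; have [h0 h1 h2] := inv_bounds_ge1 s1 (ler_wpDr (ler0n _ 2) (lexx s)).
rewrite /ninf /= (_ : s - (s + 2 + -1) = -1); last by ring.
by rewrite normrN normr1 ger0_norm ?max_r; [ring | lra | lra].
Qed.

Lemma ninf_hyperbola_far s t : 1 <= s -> t = s + 2 -> ninf (t, t^-1) (s, s^-1) = 2.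
Proof.
move=> s1 ->; have [h0 h1 h2] := inv_bounds_ge1 s1 (ler_wpDr (ler0n _ 2) (lexx s)).
rewrite /ninf /= (_ : s + 2 - s = 2); last by ring.
by rewrite ger0_norm // max_l // ler_norml; apply/andP; lra.
Qed.

Lemma not_UC_exA_exB : ~ UC_property (@exA R) (@exB R).
Proof.
pose x n : R * R := (n.+3%:R, n.+3%:R^-1).
pose z n : R * R := (n.+1%:R, n.+1%:R^-1).
pose y n := shift (x n) (-1).
have s1 n : 1 <= n.+1%:R :> R by rewrite ler1n.
have n3E n : n.+3%:R = n.+1%:R + 2 :> R by rewrite -addn2 natrD.
have Abx n : exAbar (x n) by split; rewrite //= ltr0Sn.
have Ax n : exA (x n) by apply/exA_hyp_shift; rewrite (hyp_shift_eq0 _).2.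
have Az n : exA (z n) by split; rewrite //= ltr0Sn.
have By n : exB (y n).
  by apply/exB_hyp_shift; rewrite hyp_shift_shift (hyp_shift_eq0 _).2 ?add0r.
have c_xy : (fun n => ninf (x n) (y n)) @ \oo --> dist (@exA R) (@exB R).
  rewrite dist_exA_exB (funext (fun n => ninf_shift (x n) (-1))) normrN normr1.
  exact: cvg_cst.
have c_zy : (fun n => ninf (z n) (y n)) @ \oo --> dist (@exA R) (@exB R).
  rewrite dist_exA_exB (funext (fun n => ninf_hyperbola_shift (s1 n) (n3E n))).
  have h2 : (fun n => harmonic n.+2) @ \oo --> (0 : R).
    by rewrite (cvg_shiftS (fun n => (harmonic n.+1 : R))) cvg_shiftS; exact: cvg_harmonic.
  have := cvgD (cvg_cst (1 : R)) (cvgB (@cvg_harmonic R) h2).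
  by rewrite subr0 addr0; apply.
move=> /(_ x z y Ax Az By c_xy c_zy).
rewrite (funext (fun n => ninf_hyperbola_far (s1 n) (n3E n))).
move=> /cvgrPdist_lt /(_ 1 ltr01) [N _ /(_ N (leqnn N))] /=.
by rewrite sub0r normrN ger0_norm //; lra.
Qed.

End Example.

Theorem mainTheorem17 (R : realType) :
  dist (@exA R) (@exB R) = 1 /\
  (forall a, @exA R a -> @exB R (@exT R a)) /\
  (forall b, @exB R b -> @exA R (@exT R b)) /\
  (forall a b, @exA R a -> @exB R b ->
     ninf (@exT R a) (@exT R b) <= ninf a b / 2 + dist (@exA R) (@exB R) / 2) /\
  (exists! x, best_prox (@exA R) (@exB R) (@exT R) x) /\
  ~ UC_property (@exA R) (@exB R).
Proof.
split; first exact: dist_exA_exB.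
split; first exact: exT_exA_exB.
split; first exact: exT_exB_exA.
split; first exact: exT_contraction.
split; last exact: not_UC_exA_exB.
by exists (1, 1); split=> [|x /best_prox_exTE]; [exact/best_prox_exTE|].
Qed.
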